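(* Let $\alpha,\beta$ be real (or complex) parameters and let $n,k$ be non-negative integers. Then $$\genfrac{\lfloor}{\rfloor}{0pt}{}{n}{k}^{\alpha,\beta}=\sum_{j=0}^{n-k}(-1)^{j}\,\big((k+1)\beta+n\alpha\,|\,\beta\big)^{\overline{j}}\,\genfrac{\lfloor}{\rfloor}{0pt}{}{n+1}{k+j+1}^{\alpha,\beta},$$ where $(y|\theta)^{\overline{j}}=y(y+\theta)\cdots(y+(j-1)\theta)$ and $(y|\theta)^{\overline{0}}=1$; that is, $\big((k+1)\beta+n\alpha\,|\,\beta\big)^{\overline{j}}=\prod_{i=1}^{j}\big(n\alpha+(k+i)\beta\big)$.
   Context: For parameters $\alpha,\beta$, the generalized Stirling numbers $\genfrac{\lfloor}{\rfloor}{0pt}{}{n}{k}^{\alpha,\beta}$, $0\le k\le n$, are defined by the polynomial identity in $x$ $$x(x+\alpha)\cdots(x+(n-1)\alpha)=\sum_{k=0}^{n}\genfrac{\lfloor}{\rfloor}{0pt}{}{n}{k}^{\alpha,\beta}\,x(x-\beta)\cdots(x-(k-1)\beta),$$ (empty products equal $1$), and $\genfrac{\lfloor}{\rfloor}{0pt}{}{n}{k}^{\alpha,\beta}=0$ for $k<0$ or $k>n$. *)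

From HB Require Import structures.
From mathcomp Require Import all_boot all_order all_algebra.
Set Implicit Arguments. Unset Strict Implicit. Unset Printing Implicit Defensive.
Import GRing.Theory.
Local Open Scope ring_scope.

Definition rising (R : comRingType) (y theta : R) (j : nat) : R :=
  \prod_(i < j) (y + i%:R * theta).

Definition is_gen_stirling (R : comRingType) (alpha beta : R)
    (S : nat -> nat -> R) : Prop :=
  (forall n : nat,
     \prod_(i < n) ('X + (i%:R * alpha)%:P) =
     \sum_(k < n.+1) S n k *: \prod_(i < k) ('X - (i%:R * beta)%:P))
  /\ (forall n k : nat, (n < k)%N -> S n k = 0).

(* Multiplying the defining identity of row n by x + n alpha and rewriting
   x (x - beta)...(x - (k-1) beta) (x + n alpha) in the same basis gives the
   triangular recurrence
     S(n+1, k+1) = S(n, k) + ((k+1) beta + n alpha) S(n, k+1).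
   Solving it for S(n, k) and unfolding it n - k + 1 times yields the
   alternating sum; the remainder involves S(n, n+1) = 0. *)

From mathcomp Require Import all_boot all_algebra.
From mathcomp Require Import ring zify.
Import GRing.Theory.
Local Open Scope ring_scope.

Section TriangularBasis.
Variables (R : nzRingType) (p : nat -> {poly R}).
Hypotheses (p_monic : forall k, p k \is monic) (size_p : forall k, size (p k) = k.+1).

Lemma coef_sum_triangular (N : nat) (c : nat -> R) :
  (\sum_(k < N) c k *: p k)`_N = 0.
Proof.
rewrite coef_sum big1 // => k _.
by rewrite coefZ nth_default ?mulr0 // size_p.
Qed.

Lemma triangular_coef_unique (a b : nat -> R) (N : nat) :
  \sum_(k < N) a k *: p k = \sum_(k < N) b k *: p k ->
  forall k, (k < N)%N -> a k = b k.
Proof.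
elim: N => [|N IH] //; rewrite !big_ord_recr /= => eq_sums.
have top_coef : a N = b N.
  have := congr1 (fun q : {poly R} => q`_N) eq_sums.
  have lead_pN : (p N)`_N = 1 by have /monicP := p_monic N; rewrite lead_coefE size_p.
  by rewrite !coefD !coefZ !coef_sum_triangular !add0r lead_pN !mulr1.
move=> k; rewrite ltnS leq_eqVlt => /orP [/eqP -> // | lt_kN].
by apply: IH lt_kN; apply: (addIr (a N *: p N)); rewrite {2}top_coef.
Qed.

End TriangularBasis.

Arguments triangular_coef_unique {R p}.

Section GeneralizedFalling.
Variables (R : comNzRingType) (beta : R).

Definition gen_falling (k : nat) : {poly R} :=
  \prod_(i < k) ('X - (i%:R * beta)%:P).

Lemma gen_falling_monic k : gen_falling k \is monic.
Proof. exact: monic_prod_XsubC. Qed.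

Lemma size_gen_falling k : size (gen_falling k) = k.+1.
Proof. by rewrite size_prod_XsubC; have := size_enum_ord k; rewrite enumT => ->. Qed.

Lemma gen_fallingS k : gen_falling k.+1 = gen_falling k * ('X - (k%:R * beta)%:P).
Proof. by rewrite /gen_falling big_ord_recr. Qed.

Lemma gen_falling_mulXaddC k (c : R) :
  gen_falling k * ('X + c%:P) =
  gen_falling k.+1 + (k%:R * beta + c) *: gen_falling k.
Proof.
rewrite gen_fallingS -mul_polyC [_%:P * _]mulrC -mulrDr polyCD.
by congr (_ * _); rewrite addrA subrK.
Qed.

End GeneralizedFalling.

Arguments gen_falling {R}.
Arguments gen_falling_monic {R}.
Arguments size_gen_falling {R}.

Section StirlingRecurrence.
Variables (R : comNzRingType) (alpha beta : R) (S : nat -> nat -> R).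
Hypothesis hS : is_gen_stirling alpha beta S.

Local Notation F := (gen_falling beta).

Lemma gen_stirling_row n :
  \prod_(i < n) ('X + (i%:R * alpha)%:P) = \sum_(k < n.+1) S n k *: F k.
Proof. exact: (proj1 hS n). Qed.

Lemma gen_stirling_rowS n :
  \prod_(i < n.+1) ('X + (i%:R * alpha)%:P) =
  \sum_(k < n.+2) ((if (k : nat) is m.+1 then S n m else 0)
                   + (k%:R * beta + n%:R * alpha) * S n k) *: F k.
Proof.
rewrite big_ord_recr /= gen_stirling_row mulr_suml.
rewrite (eq_bigr (fun k : 'I_n.+1 => S n k *: F k.+1
                   + ((k%:R * beta + n%:R * alpha) * S n k) *: F k)); last first.
  by move=> k _; rewrite -scalerAl gen_falling_mulXaddC scalerDr scalerA [S n k * _]mulrC.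
rewrite (eq_bigr (fun k : 'I_n.+2 => (if (k : nat) is m.+1 then S n m else 0) *: F k
                   + ((k%:R * beta + n%:R * alpha) * S n k) *: F k)); last first.
  by move=> k _; rewrite scalerDl.
rewrite !big_split /= [X in _ = X + _]big_ord_recl /= scale0r add0r.
by rewrite [X in _ = _ + X]big_ord_recr /= (proj2 hS n n.+1) // mulr0 scale0r addr0.
Qed.

Lemma gen_stirling_recurrence n m :
  S n.+1 m.+1 = S n m + (m.+1%:R * beta + n%:R * alpha) * S n m.+1.
Proof.
have [le_mn | lt_nm] := leqP m n.
  apply: (triangular_coef_unique (gen_falling_monic beta) (size_gen_falling beta)
    (S n.+1) (fun k => (if k is j.+1 then S n j else 0)
                       + (k%:R * beta + n%:R * alpha) * S n k) n.+2) => //.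
  by rewrite -gen_stirling_row gen_stirling_rowS.
by rewrite !(proj2 hS) ?mulr0 ?addr0 //; lia.
Qed.

Lemma gen_stirling_partial_expansion n k J :
  S n k = \sum_(j < J) (-1) ^+ j
            * rising (k.+1%:R * beta + n%:R * alpha) beta j * S n.+1 (k + j).+1
          + (-1) ^+ J * rising (k.+1%:R * beta + n%:R * alpha) beta J * S n (k + J).
Proof.
elim: J => [|J IH]; first by rewrite big_ord0 /rising big_ord0 addn0 !mul1r add0r.
rewrite big_ord_recr /= IH -addrA; congr (_ + _).
have step : S n (k + J) = S n.+1 (k + J).+1
              - ((k + J).+1%:R * beta + n%:R * alpha) * S n (k + J).+1.
  by rewrite gen_stirling_recurrence addrK.
by rewrite step /rising big_ord_recr /= addnS -addSn natrD exprS; ring.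
Qed.

End StirlingRecurrence.

Arguments gen_stirling_partial_expansion {R alpha beta S}.

Theorem theorem4 (R : fieldType) (alpha beta : R) (S : nat -> nat -> R)
    (hS : is_gen_stirling alpha beta S) (n k : nat) :
  S n k =
  \sum_(j < (n - k).+1)
     (-1) ^+ j * rising (k.+1%:R * beta + n%:R * alpha) beta j * S n.+1 (k + j).+1.
Proof.
rewrite [LHS](gen_stirling_partial_expansion hS n k (n - k).+1).
by rewrite (proj2 hS n) ?mulr0 ?addr0 //; lia.
Qed.
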